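(* Let $G$ be a connected Lie group, $\Gamma$ a discrete subgroup of $H=PSL(2,\mathbb{R})\times G$ and $X=\Gamma\backslash H$. If $\Gamma$ contains a semi-parabolic element, then there is a point $x\in X$ whose positive semi-orbit under $D^+$ diverges: for every sequence $d_n=\operatorname{diag}(\lambda_n,\lambda_n^{-1})\in D^+$ with $\lambda_n\to+\infty$, the sequence $x d_n$ has no convergent subsequence in $X$.
   Context: $D^+=\{\begin{pmatrix}\lambda&0\\0&\lambda^{-1}\end{pmatrix}:\lambda>1\}\subset PSL(2,\mathbb{R})$ acts on $X$ on the right by $\Gamma(f,g)d=\Gamma(fd,g)$. An element $(f,g)\in PSL(2,\mathbb{R})\times G$ is semi-parabolic if $f$ is conjugate in $PSL(2,\mathbb{R})$ to an element $u\neq Id$ of $U=\{\begin{pmatrix}1&t\\0&1\end{pmatrix}\}$. *)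

From HB Require Import structures.
From mathcomp Require Import all_boot all_order all_algebra.
From mathcomp Require Import all_classical all_reals all_analysis.
Set Implicit Arguments. Unset Strict Implicit. Unset Printing Implicit Defensive.
Import Order.TTheory GRing.Theory Num.Theory.
Import numFieldNormedType.Exports.
Local Open Scope classical_set_scope.
Local Open Scope ring_scope.

Definition is_topological_group (G : topologicalType)
    (mul : G -> G -> G) (inv : G -> G) (e : G) : Prop :=
  [/\ (forall x y z, mul x (mul y z) = mul (mul x y) z),
      (forall x, mul e x = x /\ mul x e = x),
      (forall x, mul (inv x) x = e /\ mul x (inv x) = e),
      continuous (fun p : G * G => mul p.1 p.2) &
      continuous inv].

Section H.
Variables (R : realType) (G : topologicalType)
  (mulG : G -> G -> G) (invG : G -> G) (eG : G).

(* SL(2,R) x G, seen inside 'M[R]_2 * G with the product topology. *)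
Definition inSLG (h : 'M[R]_2 * G) : Prop := \det h.1 = 1.

Definition mulH (h k : 'M[R]_2 * G) : 'M[R]_2 * G :=
  (h.1 *m k.1, mulG h.2 k.2).
Definition invH (h : 'M[R]_2 * G) : 'M[R]_2 * G := (invmx h.1, invG h.2).
Definition oneH : 'M[R]_2 * G := (1%:M, eG).

(* Gt is the preimage in SL(2,R) x G of a subgroup Gamma of PSL(2,R) x G:
   a subgroup of SL(2,R) x G containing the central element (-1, e). *)
Definition lifted_subgroup (Gt : set ('M[R]_2 * G)) : Prop :=
  [/\ Gt `<=` inSLG, Gt oneH, Gt ((-1)%:M, eG),
      (forall h k, Gt h -> Gt k -> Gt (mulH h k)) &
      (forall h, Gt h -> Gt (invH h))].

Definition discrete_set (Gt : set ('M[R]_2 * G)) : Prop :=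
  forall g, Gt g -> exists2 U, nbhs g U & U `&` Gt = [set g].

Definition unipotent (t : R) : 'M[R]_2 := \matrix_(i < 2, j < 2)
  (if (i == 0) && (j == 1) then t else if i == j then 1 else 0).

Definition diagD (l : R) : 'M[R]_2 := \matrix_(i < 2, j < 2)
  (if i == j then (if i == 0 then l else l^-1) else 0).

(* (f,g) is semi-parabolic: f is conjugate in PSL(2,R) to a nontrivial
   element of U; in terms of a lift F in SL(2,R): F = +- P u_t P^-1 with
   det P = 1 and t <> 0. *)
Definition semi_parabolic (h : 'M[R]_2 * G) : Prop :=
  exists P : 'M[R]_2, exists t : R, \det P = 1 /\ t != 0 /\
    (h.1 = P *m unipotent t *m invmx P \/ h.1 = - (P *m unipotent t *m invmx P)).

(* Convergence in X = Gt \ (SL(2,R) x G) for the quotient topology: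
   the orbit sequence Gt z_n converges to Gt y iff z_n eventually lies in every
   open Gt-saturated neighbourhood of y (open sets of X = saturated open sets
   of SL(2,R) x G, the latter being the traces of open sets W of 'M_2 * G). *)
Definition saturated (Gt : set ('M[R]_2 * G)) (W : set ('M[R]_2 * G)) : Prop :=
  forall g h, Gt g -> inSLG h -> W h -> W (mulH g h).

Definition quot_converges (Gt : set ('M[R]_2 * G))
    (z : nat -> 'M[R]_2 * G) (y : 'M[R]_2 * G) : Prop :=
  forall W : set ('M[R]_2 * G), open W -> saturated Gt W -> W y ->
    exists N, forall n, (N <= n)%N -> W (z n).

End H.

From HB Require Import structures.
From mathcomp Require Import all_boot all_order all_algebra.
From mathcomp Require Import all_classical all_reals all_analysis.
From mathcomp Require Import perm ring.

(* Write the semi-parabolic element of Gt as h = (P (k u_t) P^-1, g) with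
   k = +-1 and t <> 0, and take x = (P, e). Since d_l^-1 u_t d_l = u_(t/l^2),
   if x d_n converged to Gt y we could pick c_n in Gt with c_n x d_n --> y,
   and then the conjugates c_n h c_n^-1 in Gt would converge to
   y (k, g) y^-1, whose matrix part is the scalar k. Every subset of a
   discrete subgroup is closed, so this limit is itself a Gt-conjugate of h,
   but no conjugate of k u_t is scalar. *)

Set Implicit Arguments. Unset Strict Implicit. Unset Printing Implicit Defensive.
Import Order.TTheory GRing.Theory Num.Theory.
Import numFieldNormedType.Exports.
Local Open Scope classical_set_scope.
Local Open Scope ring_scope.

Section ProductTopology.
Context {T U : topologicalType}.

Lemma fst_cvg {X : Type} {F : set_system X} {FF : Filter F}
    {a : X -> T * U} {A : T * U} :
  a @ F --> A -> (a x).1 @[x --> F] --> A.1.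
Proof.
move=> aA; apply: (continuous_cvg _ _ aA) => B AB.
by exists (B, setT) => [|[u v] []] //; split=> //=; exact: filterT.
Qed.

Lemma snd_cvg {X : Type} {F : set_system X} {FF : Filter F}
    {a : X -> T * U} {A : T * U} :
  a @ F --> A -> (a x).2 @[x --> F] --> A.2.
Proof.
move=> aA; apply: (continuous_cvg _ _ aA) => B AB.
by exists (setT, B) => [|[u v] []] //; split=> //=; exact: filterT.
Qed.

Lemma prod_hausdorff : hausdorff_space T -> hausdorff_space U ->
  hausdorff_space (T * U)%type.
Proof.
have box (p : T * U) A B : nbhs p.1 A -> nbhs p.2 B -> nbhs p (A `*` B).
  by move=> pA pB; exists (A, B).
move=> hT hU [p1 p2] [q1 q2] pq; congr (_, _).
- apply: hT => A B pA qB.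
  have [[a b] [[/= Aa _] [/= Ba _]]] := pq (A `*` setT) (B `*` setT)
    (box (p1, p2) _ _ pA filterT) (box (q1, q2) _ _ qB filterT).
  by exists a.
- apply: hU => A B pA qB.
  have [[a b] [[_ /= Ab] [_ /= Bb]]] := pq (setT `*` A) (setT `*` B)
    (box (p1, p2) _ _ filterT pA) (box (q1, q2) _ _ filterT qB).
  by exists b.
Qed.

End ProductTopology.

Section MatrixContinuity.
Variable R : numFieldType.

Lemma cvg_mx_entries {m n T} {F : set_system T} {FF : Filter F}
    {f : T -> 'M[R]_(m, n)} {M : 'M[R]_(m, n)} :
  (forall i j, f x i j @[x --> F] --> M i j) -> f @ F --> M.
Proof.
move=> fM A [P MP sPA].
have : \forall x \near F, forall k : 'I_m * 'I_n, P k.1 k.2 (f x k.1 k.2).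
  by apply: filter_forall => k; exact: fM _ _ _ (MP k.1 k.2).
by apply: filterS => x Px; apply: sPA => i j; exact: Px (i, j).
Qed.

Lemma cvg_mx_entry {m n T} {F : set_system T} {FF : Filter F}
    {f : T -> 'M[R]_(m, n)} {M : 'M[R]_(m, n)} i j :
  f @ F --> M -> f x i j @[x --> F] --> M i j.
Proof. by move=> fM; exact: (continuous_cvg _ (@coord_continuous R m n i j M) fM). Qed.

Lemma cvg_mulmx {m n p T} {F : set_system T} {FF : Filter F}
    {f : T -> 'M[R]_(m, n)} {g : T -> 'M[R]_(n, p)} {A : 'M[R]_(m, n)}
    {B : 'M[R]_(n, p)} :
  f @ F --> A -> g @ F --> B -> f x *m g x @[x --> F] --> A *m B.
Proof.
move=> fA gB; apply: cvg_mx_entries => i j; rewrite mxE.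
under eq_fun do rewrite mxE.
apply: (cvg_big add_continuous FF) => k _.
by apply: cvgM; exact: cvg_mx_entry.
Qed.

Lemma det_continuous n : continuous (@determinant R n).
Proof.
have prod_continuous (s : 'S_n) : continuous (fun A : 'M[R]_n => \prod_i A i (s i)).
  by apply: continuous_big => [|i _]; [exact: mul_continuous | exact: coord_continuous].
rewrite /determinant => A; apply: (cvg_big add_continuous (nbhs_filter A)) => s _.
by apply: cvgM; [exact: cvg_cst | exact: prod_continuous].
Qed.

Lemma adj_continuous n : continuous (@adjugate R n).
Proof.
move=> A; apply: (@cvg_mx_entries _ _ _ (nbhs A)) => i j; rewrite !mxE.
under eq_fun do rewrite mxE.
apply: cvgM; first exact: cvg_cst.
apply: (continuous_cvg _ (@det_continuous _ _)).
apply: cvg_mx_entries => a b; rewrite !mxE.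
under eq_fun do rewrite !mxE.
exact: (@cvg_mx_entry _ _ _ (nbhs A) _ id A _ _ cvg_id).
Qed.

End MatrixContinuity.

Section TopologicalGroup.
Context {G : topologicalType} {mulG : G -> G -> G} {invG : G -> G} {eG : G}.
Hypothesis hG : is_topological_group mulG invG eG.

Lemma mulGA x y z : mulG x (mulG y z) = mulG (mulG x y) z.
Proof. by case: hG. Qed.

Lemma mul1G x : mulG eG x = x.
Proof. by case: hG => _ /(_ x) []. Qed.

Lemma mulG1 x : mulG x eG = x.
Proof. by case: hG => _ /(_ x) []. Qed.

Lemma mulVG x : mulG (invG x) x = eG.
Proof. by case: hG => _ _ /(_ x) []. Qed.

Lemma mulGV x : mulG x (invG x) = eG.
Proof. by case: hG => _ _ /(_ x) []. Qed.

Lemma invG1 : invG eG = eG.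
Proof. by rewrite -[LHS]mulG1 mulVG. Qed.

Lemma invGM x y : invG (mulG x y) = mulG (invG y) (invG x).
Proof.
have xy_inv : mulG (mulG x y) (mulG (invG y) (invG x)) = eG.
  by rewrite mulGA -(mulGA x) mulGV mulG1 mulGV.
by rewrite -[LHS]mulG1 -xy_inv mulGA mulVG mul1G.
Qed.

Lemma cvg_mulG {T} {F : set_system T} {FF : Filter F} {a b : T -> G} {A B : G} :
  a @ F --> A -> b @ F --> B -> mulG (a x) (b x) @[x --> F] --> mulG A B.
Proof.
by case: hG => _ _ _ mulc _ aA bB; exact: continuous2_cvg (mulc (A, B)) aA bB.
Qed.

Lemma cvg_invG {T} {F : set_system T} {FF : Filter F} {a : T -> G} {A : G} :
  a @ F --> A -> invG (a x) @[x --> F] --> invG A.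
Proof. by case: hG => _ _ _ _ invc aA; exact: continuous_cvg (invc A) aA. Qed.

End TopologicalGroup.

Section SpecialLinear.
Variables (R : comUnitRingType) (n : nat).
Implicit Types A B : 'M[R]_n.

Lemma invmx_det1 A : \det A = 1 -> invmx A = \adj A.
Proof. by move=> dA; rewrite /invmx unitmxE dA unitr1 invr1 scale1r. Qed.

Lemma adjM_det1 A B : \det A = 1 -> \det B = 1 ->
  \adj (A *m B) = \adj B *m \adj A.
Proof.
move=> dA dB; have dAB : \det (A *m B) = 1 by rewrite det_mulmx dA dB mulr1.
have AB_inv : (A *m B) *m (\adj B *m \adj A) = 1%:M.
  by rewrite mulmxA -(mulmxA A) mul_mx_adj dB mulmx1 mul_mx_adj dA.
by rewrite -[LHS]mulmx1 -AB_inv mulmxA mul_adj_mx dAB mul1mx.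
Qed.

Lemma conjmx_scalar_det1 A B a : \det A = 1 ->
  A *m B *m \adj A = a%:M -> B = a%:M.
Proof.
move=> dA AB; have -> : B = \adj A *m (A *m B *m \adj A) *m A.
  by rewrite !mulmxA mul_adj_mx dA mul1mx -mulmxA mul_adj_mx dA mulmx1.
by rewrite AB scalar_mxC -mulmxA mul_adj_mx dA mulmx1.
Qed.

End SpecialLinear.

Section SL2xG.
Variables (R : realType) (G : topologicalType)
  (mulG : G -> G -> G) (invG : G -> G) (eG : G).
Hypothesis hG : is_topological_group mulG invG eG.
Local Notation H := ('M[R]_2 * G)%type.
Implicit Types a b h w : H.

(* On SL(2,R) x G the inverse is given by the adjugate, which, unlike
   [invmx], is continuous everywhere. *)
Definition adjH h : H := (\adj h.1, invG h.2).

Definition conjH w h : H := mulH mulG (mulH mulG w h) (adjH w).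

Lemma cvg_mulH {T} {F : set_system T} {FF : Filter F} {a b : T -> H} {A B : H} :
  a @ F --> A -> b @ F --> B -> mulH mulG (a x) (b x) @[x --> F] --> mulH mulG A B.
Proof.
move=> aA bB; apply: (@cvg_pair _ _ _ F (nbhs (A.1 *m B.1)) (nbhs (mulG A.2 B.2))).
  by apply: cvg_mulmx; [exact: fst_cvg aA | exact: fst_cvg bB].
by apply: (cvg_mulG hG); [exact: snd_cvg aA | exact: snd_cvg bB].
Qed.

Lemma cvg_adjH {T} {F : set_system T} {FF : Filter F} {a : T -> H} {A : H} :
  a @ F --> A -> adjH (a x) @[x --> F] --> adjH A.
Proof.
move=> aA; apply: (@cvg_pair _ _ _ F (nbhs (\adj A.1)) (nbhs (invG A.2))).
  exact: (continuous_cvg _ (@adj_continuous _ _ A.1) (fst_cvg aA)).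
exact: (cvg_invG hG) (snd_cvg aA).
Qed.

Lemma cvg_conjH {T} {F : set_system T} {FF : Filter F} {a b : T -> H} {A B : H} :
  a @ F --> A -> b @ F --> B -> conjH (a x) (b x) @[x --> F] --> conjH A B.
Proof. by move=> aA bB; apply: cvg_mulH; [exact: cvg_mulH | exact: cvg_adjH]. Qed.

Lemma invH_adjH h : \det h.1 = 1 -> invH invG h = adjH h.
Proof. by move=> dh; rewrite /invH /adjH invmx_det1. Qed.

Lemma mulH_adjH h : \det h.1 = 1 -> mulH mulG (adjH h) h = oneH R eG.
Proof. by move=> dh; rewrite /mulH /adjH /oneH /= mul_adj_mx dh (mulVG hG). Qed.

Lemma mulH_adjH_eq1 a b :
  \det a.1 = 1 -> mulH mulG (adjH a) b = oneH R eG -> b = a.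
Proof.
case: a b => [A a] [B b] /= dA [AB ab]; congr (_, _).
  have AadjA : A *m \adj A = 1%:M by rewrite mul_mx_adj dA.
  by rewrite -[B]mul1mx -AadjA -mulmxA AB mulmx1.
by rewrite -[b](mul1G hG) -(mulGV hG a) -(mulGA hG) ab (mulG1 hG).
Qed.

Lemma mulHA a b h : mulH mulG a (mulH mulG b h) = mulH mulG (mulH mulG a b) h.
Proof. by rewrite /mulH /= mulmxA (mulGA hG). Qed.

Lemma mul1H h : mulH mulG (oneH R eG) h = h.
Proof. by case: h => A a; rewrite /mulH /= mul1mx (mul1G hG). Qed.

Lemma conjHM w1 w2 h : \det w1.1 = 1 -> \det w2.1 = 1 ->
  conjH w1 (conjH w2 h) = conjH (mulH mulG w1 w2) h.
Proof.
move=> dw1 dw2; rewrite /conjH /mulH /adjH /=; congr (_, _).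
  by rewrite adjM_det1 // !mulmxA.
by rewrite (invGM hG) !(mulGA hG).
Qed.

Lemma conjH_scalar w (c : R) (g : G) :
  \det w.1 = 1 -> (conjH w (c%:M, g)).1 = c%:M.
Proof. by move=> dw; rewrite /= scalar_mxC -mulmxA mul_mx_adj dw mulmx1. Qed.

End SL2xG.

Section LiftedSubgroup.
Variables (R : realType) (G : topologicalType)
  (mulG : G -> G -> G) (invG : G -> G) (eG : G).
Hypothesis hG : is_topological_group mulG invG eG.
Variable Gt : set ('M[R]_2 * G).
Hypothesis hsub : lifted_subgroup mulG invG eG Gt.
Local Notation H := ('M[R]_2 * G)%type.

Lemma Gt_det1 h : Gt h -> \det h.1 = 1.
Proof. by case: hsub => + _ _ _ _; apply. Qed.

Lemma Gt_one : Gt (oneH R eG).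
Proof. by case: hsub. Qed.

Lemma Gt_mul a b : Gt a -> Gt b -> Gt (mulH mulG a b).
Proof. by case: hsub => _ _ _ + _; apply. Qed.

Lemma Gt_adjH a : Gt a -> Gt (adjH invG a).
Proof. by move=> Ga; rewrite -invH_adjH ?Gt_det1 //; case: hsub => _ _ _ _; apply. Qed.

Lemma Gt_conjH d h : Gt d -> Gt h -> Gt (conjH mulG invG d h).
Proof. by move=> Gd Gh; apply: Gt_mul; [exact: Gt_mul | exact: Gt_adjH]. Qed.

Lemma quot_converges_nbhs (z : nat -> H) y : quot_converges mulG Gt z y ->
  forall O, nbhs y O ->
  exists N, forall n, (N <= n)%N -> exists2 d, Gt d & O (mulH mulG d (z n)).
Proof.
move=> zy O yO.
pose W := [set h : H | exists2 d, Gt d & O° (mulH mulG d h)].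
have oW : open W.
  rewrite openE => h [d Gd dh].
  have dx_cvg : mulH mulG d x @[x --> h] --> mulH mulG d h.
    by apply: (cvg_mulH hG); [exact: cvg_cst | exact: cvg_id].
  have := dx_cvg _ (open_nbhs_nbhs (conj (@open_interior _ O) dh)).
  by apply: (filterS (F := nbhs h)) => x dx; exists d.
have sW : saturated mulG Gt W.
  move=> g h Gg _ [d Gd dh]; exists (mulH mulG d (adjH invG g)).
    by apply: Gt_mul => //; exact: Gt_adjH.
  by rewrite -(mulHA hG) (mulHA hG (adjH invG g)) (mulH_adjH hG) ?Gt_det1 // (mul1H hG).
have Wy : W y by exists (oneH R eG); [exact: Gt_one | by rewrite (mul1H hG)].
have [N zW] := zy W oW sW Wy; exists N => n /zW [d Gd dz].
by exists d => //; exact: interior_subset.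
Qed.

(* Every subset of a discrete subgroup is closed: near a limit point L of S,
   any two points c, c' of S satisfy c^-1 c' = 1 by discreteness, so S meets
   a neighbourhood of L in a single point, which must be L. *)
Lemma discrete_subgroup_subset_closed S :
  hausdorff_space G -> discrete_set Gt -> S `<=` Gt -> closed S.
Proof.
move=> hT2 hdisc SGt L SL.
have detL : \det L.1 = 1.
  have det1_closed : closed [set h : H | \det h.1 = 1].
    apply: (@preimage_closed _ _ (fun h : H => \det h.1) [set 1]);
      last exact: closed_eq.
    move=> h _; apply: (continuous_cvg _ (@det_continuous _ _ h.1)).
    exact: fst_cvg cvg_id.
  by apply: det1_closed; apply: closureS SL => h /SGt /Gt_det1.
have [U0 U0_nbhs U0Gt] := hdisc _ Gt_one.
have Q_cvg : mulH mulG (adjH invG p.1) p.2 @[p --> (L, L)] --> oneH R eG.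
  rewrite -(mulH_adjH hG detL); apply: (cvg_mulH hG); last exact: snd_cvg cvg_id.
  exact: (cvg_adjH hG) (fst_cvg cvg_id).
have [[W1 W2] /= [W1L W2L] W12] := Q_cvg _ U0_nbhs.
have WL : nbhs L (W1 `&` W2) by apply: filterI.
have [c [Sc Wc]] := SL _ WL.
suff -> : L = c by [].
apply: (prod_hausdorff (@norm_hausdorff _ 'M[R]_2) hT2) => A B LA cB.
have [c' [Sc' [Ac' Wc']]] := SL _ (filterI LA WL).
have c'c : c' = c.
  apply: (mulH_adjH_eq1 hG (Gt_det1 (SGt _ Sc))).
  have : (U0 `&` Gt) (mulH mulG (adjH invG c) c').
    split; first by apply: (W12 (c, c')); split => /=; [exact: Wc.1 | exact: Wc'.2].
    by apply: Gt_mul; [exact: Gt_adjH (SGt _ Sc) | exact: SGt].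
  by rewrite U0Gt.
by exists c'; split => //; rewrite c'c; exact: nbhs_singleton.
Qed.

(* Choosing d in Gt with d z_n close to y, the conjugate d h d^-1 equals
   (d z_n) h_n (d z_n)^-1, which is close to y h' y^-1. *)
Lemma conj_class_closure (z hn : nat -> H) y h h' :
  quot_converges mulG Gt z y -> (forall n, \det (z n).1 = 1) ->
  (forall n, h = conjH mulG invG (z n) (hn n)) -> hn @ \oo --> h' ->
  closure [set conjH mulG invG d h | d in Gt] (conjH mulG invG y h').
Proof.
move=> zy detz hz hn_cvg V yV.
have conj_cvg : conjH mulG invG p.1 p.2 @[p --> (y, h')] --> conjH mulG invG y h'.
  by apply: (cvg_conjH hG); [exact: fst_cvg cvg_id | exact: snd_cvg cvg_id].
have [[A B] /= [yA h'B] sAB] := conj_cvg _ yV.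
have [N1 zA] := quot_converges_nbhs zy yA.
have [N2 _ hnB] := hn_cvg _ h'B.
have [d Gd dzA] := zA _ (leq_maxl N1 N2).
exists (conjH mulG invG d h); split; first by exists d.
rewrite (hz (maxn N1 N2)) (conjHM hG) ?(Gt_det1 Gd) //.
by apply: (sAB (_, _)); split => //; apply: hnB; rewrite /= leq_maxr.
Qed.

End LiftedSubgroup.

Section UnipotentDiagonal.
Variable R : realType.
Implicit Types (l t : R).

Lemma unipotent0 : unipotent (0 : R) = 1%:M.
Proof.
by apply/matrixP => i j; rewrite !mxE; case: i j => [[|[|//]] ?] [[|[|//]] ?].
Qed.

Lemma cvg_unipotent T (F : set_system T) {FF : Filter F} (s : T -> R) t :
  s @ F --> t -> unipotent (s x) @[x --> F] --> unipotent t.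
Proof.
move=> st; apply: cvg_mx_entries => i j; rewrite mxE.
under eq_fun do rewrite mxE.
by case: ifP => _ //; exact: cvg_cst.
Qed.

Lemma det_diagD l : l != 0 -> \det (diagD l) = 1.
Proof.
have trig : is_trig_mx (diagD l).
  apply/is_trig_mxP => i j ij; rewrite mxE ifF //.
  by apply/eqP => ji; rewrite ji ltnn in ij.
move=> l0; rewrite det_trig //.
by rewrite !big_ord_recr big_ord0 /= !mxE /= mul1r mulfV.
Qed.

Lemma diagD_unipotent l t : l != 0 ->
  diagD l *m unipotent (t / l ^+ 2) = unipotent t *m diagD l.
Proof.
move=> l0; apply/matrixP => i j; rewrite !mxE !big_ord_recr !big_ord0 /= !mxE /=.
by case: i j => [[|[|//]] ?] [[|[|//]] ?] /=; field.
Qed.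

Lemma scalar_unipotent k c t : k%:M *m unipotent t = c%:M -> k * t = 0.
Proof. by move/matrixP/(_ 0 1); rewrite mul_scalar_mx !mxE. Qed.

End UnipotentDiagonal.

Lemma cvg_increasing_nat (phi : nat -> nat) :
  (forall n, (phi n < phi n.+1)%N) -> phi @ \oo --> \oo.
Proof.
move=> incr; have phi_ge n : (n <= phi n)%N.
  by elim: n => // n IHn; exact: leq_ltn_trans IHn (incr n).
move=> A [N _ NA]; exists N => // n /= Nn.
by apply: NA; exact: leq_trans Nn (phi_ge n).
Qed.

Lemma cvgy_div_sqr (R : realType) T (F : set_system T) {FF : Filter F}
    (f : T -> R) (t : R) :
  f @ F --> +oo -> t / f x ^+ 2 @[x --> F] --> 0.
Proof.
move=> fy; have f_gt0 : \forall x \near F, 0 < f x.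
  by apply: filterS ((cvgryPge f).1 fy 1) => x; apply: lt_le_trans.
have finv0 : (f x)^-1 @[x --> F] --> 0 by exact/(gtr0_cvgV0 f_gt0).
rewrite -(mulr0 t) -(mulr0 0); under eq_fun do rewrite -exprVn expr2.
by apply: cvgM; [exact: cvg_cst | exact: cvgM].
Qed.

Section SemiParabolic.
Variables (R : realType) (G : topologicalType)
  (mulG : G -> G -> G) (invG : G -> G) (eG : G).
Hypothesis hG : is_topological_group mulG invG eG.
Local Notation H := ('M[R]_2 * G)%type.

Lemma semi_parabolicP (h : H) : semi_parabolic h ->
  exists P t k, [/\ \det P = 1, t != 0, k != 0 &
    h = conjH mulG invG (P, eG) (k%:M *m unipotent t, h.2)].
Proof.
case: h => F g [P [t [/= detP [t0 eF]]]].
have conjP k : conjH mulG invG (P, eG) (k%:M *m unipotent t, g) =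
    (k *: (P *m unipotent t *m invmx P), g).
  rewrite /conjH /mulH /adjH /= (invG1 hG) (mul1G hG) (mulG1 hG) invmx_det1 //.
  by rewrite mul_scalar_mx -scalemxAr -scalemxAl.
exists P, t; case: eF => ->.
  by exists 1; rewrite conjP scale1r oner_neq0.
by exists (-1); rewrite conjP scaleN1r oppr_eq0 oner_neq0.
Qed.

Lemma conjH_unipotent_rescale (P : 'M[R]_2) (l t k : R) (g : G) :
  \det P = 1 -> l != 0 ->
  conjH mulG invG (P, eG) (k%:M *m unipotent t, g) =
  conjH mulG invG (P *m diagD l, eG) (k%:M *m unipotent (t / l ^+ 2), g).
Proof.
move=> detP l0; have -> : (P *m diagD l, eG) = mulH mulG (P, eG) (diagD l, eG).
  by rewrite /mulH (mul1G hG).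
rewrite -(conjHM hG) ?det_diagD //; congr conjH.
rewrite /conjH /mulH /adjH /= (invG1 hG) (mul1G hG) (mulG1 hG).
rewrite -invmx_det1 ?det_diagD // !mul_scalar_mx -scalemxAr -scalemxAl.
by rewrite diagD_unipotent // mulmxK // unitmxE det_diagD // unitr1.
Qed.

Lemma conjH_unipotent_nonscalar (w : H) (t k c : R) (g : G) :
  \det w.1 = 1 -> t != 0 -> k != 0 ->
  (conjH mulG invG w (k%:M *m unipotent t, g)).1 != c%:M.
Proof.
move=> dw t0 k0; apply/eqP => /(conjmx_scalar_det1 dw)/scalar_unipotent/eqP.
by rewrite mulf_eq0 (negPf k0) (negPf t0).
Qed.

End SemiParabolic.

Theorem mainTheorem6 (R : realType) (G : topologicalType)
  (mulG : G -> G -> G) (invG : G -> G) (eG : G)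
  (hG : is_topological_group mulG invG eG)
  (hT2 : hausdorff_space G) (hlc : locally_compact [set: G])
  (hconn : connected [set: G])
  (Gt : set ('M[R]_2 * G))
  (hsub : lifted_subgroup mulG invG eG Gt) (hdisc : discrete_set Gt)
  (hpar : exists h, Gt h /\ semi_parabolic h) :
  exists x : 'M[R]_2 * G, inSLG x /\
    forall lam : nat -> R, (forall n, 1 < lam n) -> lam @ \oo --> +oo ->
      forall phi : nat -> nat, (forall n, (phi n < phi n.+1)%N) ->
        ~ exists y : 'M[R]_2 * G, inSLG y /\
            quot_converges mulG Gt
              (fun n => (x.1 *m diagD (lam (phi n)), x.2)) y.
Proof.
case: hpar => h [Gh /(semi_parabolicP hG) [P [t [k [detP t0 k0 eh]]]]].
exists (P, eG); split => // lam lam1 lamy phi phi_incr [y [dety zy]].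
pose l n := lam (phi n); pose s n := t / l n ^+ 2.
have l0 n : l n != 0 by rewrite gt_eqF // (lt_trans ltr01 (lam1 _)).
have detz n : \det (P *m diagD (l n)) = 1 by rewrite det_mulmx detP det_diagD ?mul1r.
have hz n : h = conjH mulG invG (P *m diagD (l n), eG) (k%:M *m unipotent (s n), h.2).
  by rewrite {1}eh; exact: conjH_unipotent_rescale.
have s0 : s @ \oo --> 0.
  exact: cvgy_div_sqr (cvg_comp _ _ (cvg_increasing_nat phi_incr) lamy).
have hn_cvg : (k%:M *m unipotent (s n), h.2) @[n --> \oo] --> (k%:M, h.2).
  apply: (@cvg_pair _ _ _ _ (nbhs (k%:M : 'M[R]_2)) (nbhs h.2)); last exact: cvg_cst.
  suff : k%:M *m unipotent (s n) @[n --> \oo] --> k%:M *m unipotent 0.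
    by rewrite unipotent0 mulmx1.
  exact: cvg_mulmx (cvg_cst _) (cvg_unipotent s0).
have class_sub : [set conjH mulG invG d h | d in Gt] `<=` Gt.
  by move=> _ [d Gd <-]; apply: (Gt_conjH hsub).
have [d Gd] := discrete_subgroup_subset_closed hG hsub hT2 hdisc class_sub
  (conj_class_closure hG hsub zy detz hz hn_cvg).
move=> /(congr1 fst); rewrite conjH_scalar // {1}eh (conjHM hG) ?(Gt_det1 hsub Gd) //.
apply/eqP/conjH_unipotent_nonscalar => //.
by rewrite det_mulmx (Gt_det1 hsub Gd) detP mulr1.
Qed.
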